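(* Let $P_X$ be a probability distribution on a context space $\mathcal{X}$, let $\mathcal{A}$ be a finite action set, and let $\pi_0,\pi_\theta$ be policies with $\pi_0(a|x)>0$ for all $(x,a)$. Let $f_r:\mathcal{X}\times\mathcal{A}\to[c,b]$ be a measurable reward function with $b\ge 0$, and set $w(a,x)=\pi_\theta(a|x)/\pi_0(a|x)$. Suppose that the random variable $w(A,X)f_r^2(A,X)$ is $\sigma$-sub-Gaussian both when $(X,A)\sim P_X\otimes\pi_0(A|X)$ and when $(X,A)\sim P_X\otimes\pi_\theta(A|X)$. Then $$\operatorname{Var}\bigl(w(A,X)f_r(A,X)\bigr)\le \sqrt{2\sigma^2\min\bigl(D(\pi_\theta\|\pi_0),D_r(\pi_\theta\|\pi_0)\bigr)}+b_u^2-c_l^2,$$ where $c_l=\max(c,0)$, $b_u=\max(|c|,b)$, and the variance is taken under $(X,A)\sim P_X\otimes\pi_0(A|X)$.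
   Context: A policy is a conditional distribution $\pi(a|x)$ over $\mathcal{A}$ given $x\in\mathcal{X}$; $P_X\otimes\pi(A|X)$ denotes the joint law of $(X,A)$ with $X\sim P_X$, $A|X=x\sim\pi(\cdot|x)$. The true risk is $R(\pi)=\mathbb{E}_{P_X}[\mathbb{E}_{\pi(A|X)}[f_r(X,A)]]$. The variance is $\operatorname{Var}(w f_r)=\mathbb{E}_{P_X\otimes\pi_0}[(w(A,X)f_r(A,X))^2]-R^2(\pi_\theta)$ (note $\mathbb{E}_{P_X\otimes\pi_0}[w f_r]=R(\pi_\theta)$). Conditional KL: $D(\pi_\theta\|\pi_0)=D(\pi_\theta(A|X)\|\pi_0(A|X)|P_X)=\int_{\mathcal{X}} D(\pi_\theta(\cdot|x)\|\pi_0(\cdot|x))\,dP_X(x)$, and reverse conditional KL $D_r(\pi_\theta\|\pi_0)=D(\pi_0(A|X)\|\pi_\theta(A|X)|P_X)$, where $D(P\|Q)=\int\log\frac{dP}{dQ}dP$ (or $+\infty$ if $P\not\ll Q$). A random variable $Y$ is $\sigma$-sub-Gaussian if $\mathbb{E}[e^{\gamma(Y-\mathbb{E}Y)}]\le e^{\gamma^2\sigma^2/2}$ for all $\gamma\in\mathbb{R}$. *)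

From HB Require Import structures.
From mathcomp Require Import all_boot all_order all_algebra.
From mathcomp Require Import all_classical all_reals all_analysis.
Set Implicit Arguments. Unset Strict Implicit. Unset Printing Implicit Defensive.
Import Order.TTheory GRing.Theory Num.Theory.
Local Open Scope ring_scope.
Local Open Scope ereal_scope.

(* A policy on a finite action set A: pi x a = pi(a|x), a probability vector
   for every context x, measurable in x for each fixed action. *)
Definition policy (d : measure_display) (T : measurableType d) (R : realType)
  (A : finType) (pi : T -> A -> R) : Prop :=
  (forall x a, (0 <= pi x a)%R) /\
  (forall x, (\sum_(a : A) pi x a)%R = 1%R) /\
  (forall a, measurable_fun setT (fun x => pi x a)).

(* E_{P_X (x) pi}[g(X,A)] = int (sum_a pi(a|x) g(x,a)) dP_X(x) *)
Definition jexp (d : measure_display) (T : measurableType d) (R : realType)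
  (A : finType) (P : probability T R) (pi : T -> A -> R) (g : T -> A -> R)
  : \bar R :=
  \int[P]_x ((\sum_(a : A) pi x a * g x a)%R)%:E.

Definition jintegrable (d : measure_display) (T : measurableType d)
  (R : realType) (A : finType) (P : probability T R) (pi : T -> A -> R)
  (g : T -> A -> R) : Prop :=
  P.-integrable setT (fun x => ((\sum_(a : A) pi x a * `|g x a|)%R)%:E).

Definition subgaussian (d : measure_display) (T : measurableType d)
  (R : realType) (A : finType) (P : probability T R) (pi : T -> A -> R)
  (Y : T -> A -> R) (sigma : R) : Prop :=
  jintegrable P pi Y /\
  forall gamma : R,
    jexp P pi (fun x a => expR (gamma * (Y x a - fine (jexp P pi Y))))
    <= (expR (gamma ^+ 2 * sigma ^+ 2 / 2))%:E.

Definition kl (R : realType) (A : finType) (p q : A -> R) : \bar R :=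
  \sum_(a : A) (if p a == 0%R then 0
                else if q a == 0%R then +oo
                else (p a * ln (p a / q a))%:E).

Definition condKL (d : measure_display) (T : measurableType d) (R : realType)
  (A : finType) (P : probability T R) (p q : T -> A -> R) : \bar R :=
  \int[P]_x kl (p x) (q x).

Definition risk (d : measure_display) (T : measurableType d) (R : realType)
  (A : finType) (P : probability T R) (pi : T -> A -> R) (f : T -> A -> R)
  : \bar R := jexp P pi f.

(* Var(w f_r) under P_X (x) pi0, as E[(w f)^2] - R(pi_theta)^2 *)
Definition ipsVar (d : measure_display) (T : measurableType d) (R : realType)
  (A : finType) (P : probability T R) (pi0 pith : T -> A -> R)
  (f : T -> A -> R) : \bar R :=
  jexp P pi0 (fun x a => ((pith x a / pi0 x a) * f x a) ^+ 2)%R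
  - risk P pith f * risk P pith f.

From HB Require Import structures.
From mathcomp Require Import all_boot all_order all_algebra.
From mathcomp Require Import all_classical all_reals all_analysis.
From mathcomp Require Import measurable_realfun ring lra.
Set Implicit Arguments. Unset Strict Implicit. Unset Printing Implicit Defensive.
Import Order.TTheory GRing.Theory Num.Theory.
Local Open Scope ring_scope.

(* Write Y = w f^2.  The variance is E_pith[Y] - R(pith)^2, because
   E_pi0[(w f)^2] = E_pith[w f^2].  The Donsker-Varadhan inequality turns the
   sub-Gaussian bound on Y under one policy into the transport inequality
   gamma (E_q[Y] - E_p[Y]) <= gamma^2 sigma^2 / 2 + D(q || p) for every gamma,
   in either KL direction, and optimising in gamma gives
   E_pith[Y] - E_pi0[Y] <= sqrt (2 sigma^2 D).  Finally
   E_pi0[Y] = E_pith[f^2] <= b_u^2 and R(pith)^2 >= c_l^2 since R(pith) >= c. *)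

Lemma le_sqrt_of_linear_le_quadratic (R : rcfType) (x s D : R) :
  (forall mu, 0 < mu -> mu * x <= mu ^+ 2 * s ^+ 2 / 2 + D) ->
  x <= Num.sqrt (2 * s ^+ 2 * D).
Proof.
move=> xD; have [x_le0|x_gt0] := leP x 0; first exact: le_trans x_le0 (sqrtr_ge0 _).
have [s0|s0] := eqVneq s 0.
  have := xD ((`|D| + 1) / x) (divr_gt0 (ltr_pwDr ltr01 (normr_ge0 _)) x_gt0).
  rewrite s0 expr0n /= mulr0 mul0r add0r mulfVK ?gt_eqF //.
  by have := ler_norm D; lra.
have s2_gt0 : 0 < s ^+ 2 by rewrite exprn_even_gt0.
(* the optimal [mu = x / s^2] gives [x^2 / (2 s^2) <= D] *)
have := xD (x / s ^+ 2) (divr_gt0 x_gt0 s2_gt0).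
have -> : x / s ^+ 2 * x = x ^+ 2 / s ^+ 2 by rewrite mulrAC -expr2.
have -> : (x / s ^+ 2) ^+ 2 * s ^+ 2 / 2 = x ^+ 2 / s ^+ 2 / 2 by field.
move=> xD2; have : x ^+ 2 / s ^+ 2 <= 2 * D by lra.
rewrite ler_pdivrMr // => x2D; have : x ^+ 2 <= 2 * s ^+ 2 * D by lra.
by move/ler_wsqrtr; rewrite sqrtr_sqr ger0_norm // ltW.
Qed.

Lemma normr_le_max_bounds (R : realDomainType) (c b y : R) :
  c <= y <= b -> `|y| <= Num.max `|c| b.
Proof.
case/andP=> cy yb; rewrite le_max; have [y0|y0] := leP 0 y.
  by rewrite ger0_norm // yb orbT.
by rewrite ltr0_norm // -normrN (le_trans _ (ler_norm (- c))) // lerN2.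
Qed.

Lemma sqr_max0_le (R : realDomainType) (c y : R) :
  c <= y -> Num.max c 0 ^+ 2 <= y ^+ 2.
Proof. by move=> cy; have [c0|c0] := leP c 0; nra. Qed.

Lemma sqr_le_max_bounds (R : realDomainType) (c b y : R) :
  c <= y <= b -> y ^+ 2 <= Num.max `|c| b ^+ 2.
Proof.
move=> cyb; have y_bu := normr_le_max_bounds cyb.
by rewrite -real_normK ?num_real // lerXn2r ?nnegrE // (le_trans _ y_bu).
Qed.

Lemma kl_term_ge (R : realType) (p q G K : R) : 0 <= p -> 0 <= q ->
  ((q * (G + (1 - K)) - expR (- K) * (p * expR G))%:E <=
   (if q == 0%R then 0 else if p == 0%R then +oo else (q * ln (q / p))%:E))%E.
Proof.
move=> p0 q0; have [->|qn] := eqVneq q 0.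
  rewrite mul0r add0r lee_fin oppr_le0.
  by rewrite mulr_ge0 ?expR_ge0 // mulr_ge0 ?expR_ge0.
have [_|pn] := eqVneq p 0; first exact: leey.
have qp : 0 < q by rewrite lt_def qn.
have pp : 0 < p by rewrite lt_def pn.
rewrite lee_fin; set t := G - K - ln (q / p).
(* with this [t] the inequality is [q (1 + t) <= q e^t] *)
have qet : expR (- K) * (p * expR G) = q * expR t.
  rewrite /t !expRD !expRN lnK ?posrE ?divr_gt0 //.
  by field; rewrite pn qn gt_eqF ?expR_gt0.
have := ler_wpM2l (ltW qp) (expR_ge1Dx t).
by rewrite qet /t; nra.
Qed.

Lemma kl_ge_variational (R : realType) (A : finType) (p q G : A -> R) (C : R) :
  (forall a, 0 <= p a) -> (forall a, 0 <= q a) -> \sum_a q a = 1 ->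
  ((\sum_a q a * G a + (1 - C) - expR (- C) * \sum_a p a * expR (G a))%:E
   <= kl q p)%E.
Proof.
move=> p0 q0 q1.
have -> : \sum_a q a * G a + (1 - C) - expR (- C) * \sum_a p a * expR (G a)
    = \sum_a (q a * (G a + (1 - C)) - expR (- C) * (p a * expR (G a))).
  rewrite sumrB -mulr_sumr; congr (_ - _).
  under [RHS]eq_bigr do rewrite mulrDr.
  by rewrite big_split /= -mulr_suml q1 mul1r.
by rewrite /kl -sumEFin; apply: lee_sum => a _; exact: kl_term_ge.
Qed.

Lemma kl_ge0 (R : realType) (A : finType) (p q : A -> R) :
  (forall a, 0 <= p a) -> (forall a, 0 <= q a) ->
  \sum_a p a = 1 -> \sum_a q a = 1 -> (0 <= kl q p)%E.
Proof.
move=> p0 q0 p1 q1; have := kl_ge_variational (fun _ => 0) 0 p0 q0 q1.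
rewrite oppr0 expR0 mul1r big1 ?add0r => [|a _]; last by rewrite mulr0.
by under eq_bigr do rewrite mulr1; rewrite p1 addr0 subrr.
Qed.

Section policy_expectation.
Context (d : measure_display) (T : measurableType d) (R : realType)
  (A : finType) (P : probability T R).
Implicit Types (p q : T -> A -> R) (Y : T -> A -> R).

Local Notation measurable_actions Y :=
  (forall a, measurable_fun setT (fun x => Y x a)).

Lemma fine_probability_setT : fine (P setT) = 1.
Proof. by rewrite probability_setT. Qed.

Lemma integrableZl_EFin (k : R) (h : T -> R) :
  P.-integrable setT (EFin \o h) -> P.-integrable setT (EFin \o (fun x => k * h x)).
Proof.
move=> hi; apply: (eq_integrable measurableT _ _ _ (integrableZl measurableT k hi)).
by move=> x _; rewrite /= EFinM.
Qed.

Lemma integrableD_EFin (h1 h2 : T -> R) :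
  P.-integrable setT (EFin \o h1) -> P.-integrable setT (EFin \o h2) ->
  P.-integrable setT (EFin \o (fun x => h1 x + h2 x)).
Proof.
move=> i1 i2; apply: (eq_integrable measurableT _ _ _ (integrableD measurableT i1 i2)).
by move=> x _; rewrite /= EFinD.
Qed.

Lemma integrableB_EFin (h1 h2 : T -> R) :
  P.-integrable setT (EFin \o h1) -> P.-integrable setT (EFin \o h2) ->
  P.-integrable setT (EFin \o (fun x => h1 x - h2 x)).
Proof.
move=> i1 i2; apply: (eq_integrable measurableT _ _ _ (integrableB measurableT i1 i2)).
by move=> x _; rewrite /= EFinB.
Qed.

Lemma measurable_fun_inv_pos (h : T -> R) :
  measurable_fun setT h -> (forall x, 0 < h x) ->
  measurable_fun setT (fun x => (h x)^-1).
Proof.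
move=> mh h0; have -> : (fun x => (h x)^-1) = (fun x => expR (- ln (h x))).
  by apply/funext => x; rewrite expRN lnK // posrE.
by apply: measurableT_comp => //; apply: measurableT_comp => //;
  exact: measurableT_comp.
Qed.

Lemma measurable_policy_sum q Y : policy q -> measurable_actions Y ->
  measurable_fun setT (fun x => \sum_a q x a * Y x a).
Proof.
move=> [_ [_ qm]] Ym; apply: measurable_sum => a; exact: measurable_funM.
Qed.

Lemma jintegrable_integrable q Y : policy q -> measurable_actions Y ->
  jintegrable P q Y ->
  P.-integrable setT (EFin \o fun x => \sum_a q x a * Y x a).
Proof.
move=> hq Ym qY; apply: (le_integrable measurableT _ _ qY).
  exact/measurable_EFinP/measurable_policy_sum.
have [q0 _] := hq; move=> x _ /=; rewrite lee_fin.
rewrite [X in _ <= X]ger0_norm; last by apply: sumr_ge0 => a _; exact: mulr_ge0.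
apply: (le_trans (ler_norm_sum _ _ _)); apply: ler_sum => a _.
by rewrite normrM ger0_norm.
Qed.

Lemma jintegrable_bounded q Y (M : R) : policy q -> measurable_actions Y ->
  (forall x a, `|Y x a| <= M) -> jintegrable P q Y.
Proof.
move=> hq Ym YM; have [q0 [q1 _]] := hq.
apply: (le_integrable measurableT _ _ (finite_measure_integrable_cst P M measurableT)).
  apply/measurable_EFinP/measurable_policy_sum => // a.
  exact: measurableT_comp.
move=> x _ /=; rewrite lee_fin (le_trans _ (ler_norm M)) // ger0_norm; last first.
  by apply: sumr_ge0 => a _; exact: mulr_ge0.
apply: (le_trans (ler_sum _ (fun a _ => ler_wpM2l (q0 x a) (YM x a)))).
by rewrite -mulr_suml q1 mul1r.
Qed.

Lemma jexp_fineK q Y : policy q -> measurable_actions Y -> jintegrable P q Y ->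
  jexp P q Y = (fine (jexp P q Y))%:E.
Proof.
move=> hq Ym qY; rewrite fineK //.
exact: integrable_fin_num (jintegrable_integrable hq Ym qY).
Qed.

Lemma le_fine_jexp q Y1 Y2 : policy q ->
  measurable_actions Y1 -> measurable_actions Y2 ->
  jintegrable P q Y1 -> jintegrable P q Y2 -> (forall x a, Y1 x a <= Y2 x a) ->
  fine (jexp P q Y1) <= fine (jexp P q Y2).
Proof.
move=> hq Ym1 Ym2 qY1 qY2 Y12; have [q0 _] := hq.
apply: le_Rintegral; [exact: measurableT|exact: jintegrable_integrable..|].
by move=> x _; apply: ler_sum => a _; exact: ler_wpM2l.
Qed.

Lemma fine_jexp_cst q (k : R) : policy q -> fine (jexp P q (fun _ _ => k)) = k.
Proof.
move=> [_ [q1 _]]; rewrite /jexp.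
under eq_integral do rewrite -mulr_suml q1 mul1r.
by rewrite integral_cst //= probability_setT mule1.
Qed.

Lemma policy_sum_affine q Y (g e : R) x : policy q ->
  \sum_a q x a * (g * (Y x a - e)) = g * (\sum_a q x a * Y x a) - g * e.
Proof.
move=> [_ [q1 _]].
rewrite (eq_bigr (fun a => g * (q x a * Y x a) - (g * e) * q x a)) => [|a _];
  last by ring.
by rewrite sumrB -!mulr_sumr q1 mulr1.
Qed.

Lemma integrable_jexp_affine q Y (g e : R) : policy q -> measurable_actions Y ->
  jintegrable P q Y ->
  P.-integrable setT (EFin \o fun x => \sum_a q x a * (g * (Y x a - e))).
Proof.
move=> hq Ym qY; have qYi := jintegrable_integrable hq Ym qY.
apply: (eq_integrable measurableT
  (EFin \o fun x => g * (\sum_a q x a * Y x a) - g * e)).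
  by move=> x _ /=; rewrite policy_sum_affine.
apply: integrableB_EFin; last exact: finite_measure_integrable_cst.
exact: integrableZl_EFin.
Qed.

Lemma fine_jexp_affine q Y (g e : R) : policy q -> measurable_actions Y ->
  jintegrable P q Y ->
  fine (jexp P q (fun x a => g * (Y x a - e))) = g * (fine (jexp P q Y) - e).
Proof.
move=> hq Ym qY; have qYi := jintegrable_integrable hq Ym qY.
rewrite /jexp; under eq_integral do rewrite policy_sum_affine //.
change (\int[P]_x (g * (\sum_a q x a * Y x a) - g * e)
  = g * (\int[P]_x (\sum_a q x a * Y x a) - e)).
rewrite RintegralB //; last exact: finite_measure_integrable_cst.
  by rewrite RintegralZl // Rintegral_cst // fine_probability_setT; ring.
exact: integrableZl_EFin.
Qed.

Lemma measurable_kl p q : policy p -> policy q ->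
  measurable_fun setT (fun x => kl (q x) (p x)).
Proof.
move=> [p0 [_ pm]] [q0 [_ qm]]; apply: emeasurable_sum => a.
have -> : (fun x => if q x a == 0 then 0%E else if p x a == 0 then +oo%E
      else (q x a * ln (q x a / p x a))%:E)
    = (fun x => if q x a == 0 then 0%E else if p x a == 0 then +oo%E
      else (q x a * (ln (q x a) - ln (p x a)))%:E).
  apply/funext => x; case: eqVneq => // qn; case: eqVneq => // pn.
  by rewrite ln_div // posrE lt_def ?qn ?pn ?q0 ?p0.
apply: measurable_fun_ifT; first exact: measurable_fun_eqr.
  exact: measurable_cst.
apply: measurable_fun_ifT; first exact: measurable_fun_eqr.
  exact: measurable_cst.
apply/measurable_EFinP/measurable_funM => //.
by apply: measurable_funB; exact: measurableT_comp.
Qed.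

(* Donsker-Varadhan: integrate [kl_ge_variational] and use [E_p[e^G] <= e^C]. *)
Lemma fine_jexp_le_condKL p q G (C : R) : policy p -> policy q ->
  measurable_actions G ->
  P.-integrable setT (EFin \o fun x => \sum_a q x a * G x a) ->
  (jexp P p (fun x a => expR (G x a)) <= (expR C)%:E)%E ->
  (condKL P q p < +oo)%E ->
  fine (jexp P q G) <= C + fine (condKL P q p).
Proof.
move=> hp hq Gm qGi pG KLfin; have [p0 [p1 _]] := hp; have [q0 [q1 _]] := hq.
set SG := fun x => \sum_a q x a * G x a.
set SE := fun x => \sum_a p x a * expR (G x a).
have SE0 x : 0 <= SE x.
  by apply: sumr_ge0 => a _; rewrite mulr_ge0 ?expR_ge0.
have pEi : P.-integrable setT (EFin \o SE).
  apply/integrableP; split.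
    by apply/measurable_EFinP/measurable_policy_sum => // a; exact: measurableT_comp.
  under eq_integral do rewrite /= ger0_norm //.
  exact: le_lt_trans pG (ltry _).
set r := fun x => SG x + (1 - C) - expR (- C) * SE x.
have SGCi : P.-integrable setT (EFin \o fun x => SG x + (1 - C)).
  by apply: integrableD_EFin => //; exact: finite_measure_integrable_cst.
have ri := integrableB_EFin SGCi (integrableZl_EFin (expR (- C)) pEi).
have KL0 x : (0 <= kl (q x) (p x))%E by apply: kl_ge0.
have KLi : P.-integrable setT (fun x => kl (q x) (p x)).
  apply/integrableP; split; first exact: measurable_kl.
  by under eq_integral do rewrite gee0_abs //.
have rKL : (\int[P]_x (r x)%:E <= condKL P q p)%E.
  by apply: le_integral => // x _; exact: kl_ge_variational.
rewrite -(fineK (integrable_fin_num measurableT ri)) in rKL.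
rewrite /condKL -(fineK (integrable_fin_num measurableT KLi)) lee_fin in rKL.
change (is_true (Rintegral P setT r <= fine (condKL P q p))) in rKL.
have rE : \int[P]_x r x = \int[P]_x SG x + (1 - C) - expR (- C) * \int[P]_x SE x.
  rewrite RintegralB //; last exact: integrableZl_EFin.
  rewrite RintegralD //; last exact: finite_measure_integrable_cst.
  by rewrite RintegralZl // Rintegral_cst // fine_probability_setT mulr1.
have SEC : expR (- C) * \int[P]_x SE x <= 1.
  rewrite -(expRxMexpNx_1 C) [X in _ <= X]mulrC ler_wpM2l ?expR_ge0 //.
  by rewrite -lee_fin /Rintegral (fineK (integrable_fin_num measurableT pEi)).
change (is_true (\int[P]_x SG x <= C + fine (condKL P q p))); lra.
Qed.

Lemma fine_jexp_bounded q Y (lo hi : R) : policy q -> measurable_actions Y ->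
  (forall x a, lo <= Y x a <= hi) -> lo <= fine (jexp P q Y) <= hi.
Proof.
move=> hq Ym Ybnd; have cstm k : measurable_actions (fun _ _ => k).
  by move=> a; exact: measurable_cst.
have jcst k : jintegrable P q (fun _ _ => k).
  by apply: (jintegrable_bounded (M := `|k|)).
have qY : jintegrable P q Y.
  apply: (jintegrable_bounded (M := Num.max `|lo| hi)) => // x a.
  exact: normr_le_max_bounds.
rewrite -[X in X <= _ <= _](fine_jexp_cst lo hq).
rewrite -[X in _ <= _ <= X](fine_jexp_cst hi hq).
by apply/andP; split; apply: le_fine_jexp => // x a; case/andP: (Ybnd x a).
Qed.

Lemma jexp_importance_weight p q Y : (forall x a, 0 < p x a) ->
  jexp P p (fun x a => q x a / p x a * Y x a) = jexp P q Y.
Proof.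
move=> p_gt0; apply: eq_integral => x _; congr EFin; apply: eq_bigr => a _.
by rewrite mulrA mulrCA divff ?mulr1 // gt_eqF.
Qed.

Lemma subgaussian_transport p q Y (sigma gamma : R) :
  policy p -> policy q -> measurable_actions Y ->
  subgaussian P p Y sigma -> jintegrable P q Y -> (condKL P q p < +oo)%E ->
  gamma * (fine (jexp P q Y) - fine (jexp P p Y))
    <= gamma ^+ 2 * sigma ^+ 2 / 2 + fine (condKL P q p).
Proof.
move=> hp hq Ym [_ pY] qY KLfin.
rewrite -fine_jexp_affine //; apply: fine_jexp_le_condKL => //.
- by move=> a; apply: measurable_funM => //; exact: measurable_funB.
- exact: integrable_jexp_affine.
Qed.

Lemma jexp_gap_le_sqrt_min_condKL p q Y (sigma : R) :
  policy p -> policy q -> measurable_actions Y ->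
  subgaussian P p Y sigma -> subgaussian P q Y sigma ->
  let m := Order.min (condKL P q p) (condKL P p q) in (m < +oo)%E ->
  fine (jexp P q Y) - fine (jexp P p Y) <= Num.sqrt (2 * sigma ^+ 2 * fine m).
Proof.
move=> hp hq Ym pY qY m m_fin; apply: le_sqrt_of_linear_le_quadratic => mu _.
move: m_fin; rewrite /m minEle; case: ifPn => _ KL_fin.
  exact: subgaussian_transport mu hp hq Ym pY qY.1 KL_fin.
have := subgaussian_transport (- mu) hq hp Ym qY pY.1 KL_fin.
by rewrite sqrrN mulNr -mulrN opprB.
Qed.

End policy_expectation.

Theorem proposition1 (d : measure_display) (T : measurableType d)
  (R : realType) (A : finType) (P : probability T R)
  (pi0 pith : T -> A -> R) (f : T -> A -> R) (c b sigma : R) :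
  policy pi0 -> policy pith ->
  (forall x a, 0 < pi0 x a) ->
  (forall a, measurable_fun setT (fun x => f x a)) ->
  (forall x a, c <= f x a <= b) ->
  0 <= b ->
  let w := fun x a => pith x a / pi0 x a in
  subgaussian P pi0 (fun x a => w x a * f x a ^+ 2) sigma ->
  subgaussian P pith (fun x a => w x a * f x a ^+ 2) sigma ->
  let m := Order.min (condKL P pith pi0) (condKL P pi0 pith) in
  (m < +oo)%E ->
  (ipsVar P pi0 pith f <=
    (Num.sqrt (2 * sigma ^+ 2 * fine m)
     + Num.max `|c| b ^+ 2 - Num.max c 0 ^+ 2)%:E)%E.
Proof.
move=> pi0P pithP pi0_gt0 fm fcb _ w sg0 sgt m m_fin.
set Y := fun x a => w x a * f x a ^+ 2.
have f2m a : measurable_fun setT (fun x => f x a ^+ 2) by exact: measurable_funX.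
have Ym a : measurable_fun setT (fun x => Y x a).
  apply: measurable_funM => //; apply: measurable_funM; first exact: pithP.2.2.
  by apply: measurable_fun_inv_pos => //; exact: pi0P.2.2.
set E0 := fine (jexp P pi0 Y); set Et := fine (jexp P pith Y).
have gap : Et - E0 <= Num.sqrt (2 * sigma ^+ 2 * fine m).
  exact: jexp_gap_le_sqrt_min_condKL pi0P pithP Ym sg0 sgt m_fin.
set bu := Num.max `|c| b.
have E0_le : E0 <= bu ^+ 2.
  rewrite /E0 jexp_importance_weight //.
  suff /andP[] : 0 <= fine (jexp P pith (fun x a => f x a ^+ 2)) <= bu ^+ 2 by [].
  by apply: fine_jexp_bounded => // x a; rewrite sqr_ge0 sqr_le_max_bounds.
have /andP[c_le_risk _] := fine_jexp_bounded P pithP fm fcb.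
have wf2 : jexp P pi0 (fun x a => (pith x a / pi0 x a * f x a) ^+ 2) = Et%:E.
  rewrite -(jexp_fineK pithP Ym sgt.1) -(jexp_importance_weight P pith Y pi0_gt0).
  by apply: eq_integral => x _; congr EFin; apply: eq_bigr => a _; rewrite /Y /w; ring.
have f_int : jintegrable P pith f.
  by apply: (jintegrable_bounded P (M := bu)) => // x a; exact: normr_le_max_bounds.
rewrite /ipsVar /risk wf2 (jexp_fineK pithP fm f_int) -EFinM -EFinB lee_fin.
have := sqr_max0_le c_le_risk; rewrite expr2; lra.
Qed.
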